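(* Let $\mathcal{G}=(V,L)$ be a finite connected undirected graph with monitor set $M$ and non-monitor set $N=V\setminus M$, $\sigma=|N|$, and let $P$ be a given set of measurement paths between monitors (Uncontrollable Probing). Then for every $v\in N$, the maximum identifiability index of $v$ satisfies $\mathrm{MSC}(v)-1\le\Omega_{\mathrm{UP}}(v)\le\mathrm{MSC}(v)$.
   Context: Failure model: a failure set is any $F\subseteq N$; a path fails iff it traverses a node of $F$. $P_F$ is the set of paths in $P$ traversing a node of $F$; $F_1,F_2$ distinguishable iff $P_{F_1}\ne P_{F_2}$. $S\subseteq N$ is $k$-identifiable if any two failure sets $F_1,F_2$ with $|F_1|,|F_2|\le k$ and $F_1\cap S\ne F_2\cap S$ are distinguishable (every set is trivially $0$-identifiable). $\Omega(v)$ is the maximum $k\in\{0,\dots,\sigma\}$ such that $\{v\}$ is $k$-identifiable. For $v\in N$, $P_v$ is the set of paths in $P$ traversing $v$. $\mathrm{MSC}(v)$ is the minimum cardinality of a set $V'\subseteq N\setminus\{v\}$ with $P_v\subseteq\bigcup_{w\in V'}P_w$; if no such $V'$ exists (e.g. when $v$ lies on a two-hop measurement path monitor–$v$–monitor), $\mathrm{MSC}(v):=\sigma$. *)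

From mathcomp Require Import all_boot.
Set Implicit Arguments. Unset Strict Implicit. Unset Printing Implicit Defensive.

Section Tomography.
Variables (T : finType) (M : {set T}) (m : nat) (P : 'I_m -> seq T).

Definition nonmon : {set T} := ~: M.
Definition sigma : nat := #|nonmon|.

Definition PF (F : {set T}) : {set 'I_m} := [set i | has (fun x => x \in F) (P i)].

Definition distinguishable (F1 F2 : {set T}) : bool := PF F1 != PF F2.

Definition k_identifiable (S : {set T}) (k : nat) : bool :=
  [forall F1 : {set T}, forall F2 : {set T},
     [&& F1 \subset nonmon, F2 \subset nonmon, #|F1| <= k, #|F2| <= k
       & F1 :&: S != F2 :&: S] ==> distinguishable F1 F2].

Definition Omega (v : T) : nat :=
  \max_(k < sigma.+1 | k_identifiable [set v] k) k.

Definition msc_cover (v : T) (V' : {set T}) : bool :=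
  (V' \subset nonmon :\ v) && (PF [set v] \subset PF V').

Definition MSC (v : T) : nat :=
  if [exists V' : {set T}, msc_cover v V']
  then \big[minn/sigma]_(V' : {set T} | msc_cover v V') #|V'|
  else sigma.
End Tomography.

Definition measurement_path (T : finType) (e : rel T) (M : {set T}) (q : seq T) : Prop :=
  exists x s, [/\ q = x :: s, s != [::], path e x s, uniq q & (x \in M) && (last x s \in M)].

From mathcomp Require Import all_boot.

Set Implicit Arguments.
Unset Strict Implicit.
Unset Printing Implicit Defensive.

(* If F1 and F2 are failure sets of size at most k that cannot be told apart,
   with v in F2 but not in F1, then P_v is covered by P_F1 = P_F2, so F1 is an
   MSC-cover of v: hence {v} is (MSC(v) - 1)-identifiable.  Conversely, for any
   cover V the failure sets V and V + {v} affect the same paths, so {v} is not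
   (|V| + 1)-identifiable. *)

Lemma bigminn_leq_seq (I : eqType) (r : seq I) (P : pred I) (F : I -> nat) d i0 :
  i0 \in r -> P i0 -> \big[minn/d]_(i <- r | P i) F i <= F i0.
Proof.
move=> + Pi0; elim: r => // h t IH; rewrite inE big_cons.
case/predU1P => [<-|i0t]; first by rewrite Pi0 geq_minl.
by case: ifP => _; rewrite ?geq_min IH ?orbT.
Qed.

Section Identifiability.
Variables (T : finType) (M : {set T}) (m : nat) (P : 'I_m -> seq T).

Lemma PF_setU (A B : {set T}) : PF P (A :|: B) = PF P A :|: PF P B.
Proof.
apply/setP => i; rewrite !inE; apply/hasP/orP.
  by case=> x xPi; rewrite inE => /orP [xA|xB]; [left|right]; apply/hasP; exists x.
by case=> /hasP [x xPi xAB]; exists x; rewrite // inE xAB ?orbT.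
Qed.

Lemma PF_subset (A B : {set T}) : A \subset B -> PF P A \subset PF P B.
Proof. by move/setUidPr => <-; rewrite PF_setU subsetUl. Qed.

Lemma MSC_le_sigma v : MSC M P v <= sigma M.
Proof.
rewrite /MSC; case: ifP => // _.
elim/big_ind: _ => // [x y hx _|V /andP [VNv _]]; first by rewrite geq_min hx.
by apply: subset_leq_card; apply: subset_trans VNv (subD1set _ _).
Qed.

Lemma MSC_le_cover v V : msc_cover M P v V -> MSC M P v <= #|V|.
Proof.
move=> coverV; rewrite /MSC.
have -> : [exists V', msc_cover M P v V'] by apply/existsP; exists V.
exact: bigminn_leq_seq (mem_index_enum V) coverV.
Qed.

Lemma leq_MSC v k :
  k <= sigma M -> (forall V, msc_cover M P v V -> k <= #|V|) -> k <= MSC M P v.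
Proof.
move=> k_le_sigma k_le_cover; rewrite /MSC; case: ifP => // _.
by elim/big_ind: _ => // x y kx ky; rewrite leq_min kx.
Qed.

Lemma leq_Omega v k :
  k <= sigma M -> k_identifiable M P [set v] k -> k <= Omega M P v.
Proof.
rewrite -ltnS => k_lt idk.
exact: (@leq_bigmax_cond _ _ (fun i : 'I__ => nat_of_ord i) (Ordinal k_lt)).
Qed.

Lemma Omega_le v c :
  (forall k, k <= sigma M -> k_identifiable M P [set v] k -> k <= c) ->
  Omega M P v <= c.
Proof. by move=> H; apply/bigmax_leqP => i; apply: H; rewrite -ltnS. Qed.

Lemma setI1_neq (v : T) (F1 F2 : {set T}) :
  F1 :&: [set v] != F2 :&: [set v] -> (v \in F1) != (v \in F2).
Proof.
apply: contraNN => /eqP vF; apply/eqP/setP => x; rewrite !inE.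
by case: eqP => [->|]; rewrite ?vF ?andbF.
Qed.

Lemma indistinguishable_cover v (F1 F2 : {set T}) :
  F1 \subset nonmon M -> v \notin F1 -> v \in F2 -> PF P F1 = PF P F2 ->
  msc_cover M P v F1.
Proof.
move=> F1N vF1 vF2 eqPF; apply/andP; split.
  by apply/subsetP => x xF1; rewrite in_setD1 (subsetP F1N) // andbT;
     apply: contraNneq vF1 => <-.
by rewrite eqPF PF_subset // sub1set.
Qed.

Lemma MSC_pred_identifiable v : k_identifiable M P [set v] (MSC M P v - 1).
Proof.
apply/forallP => F1; apply/forallP => F2; apply/implyP.
case/and5P => F1N F2N F1k F2k /setI1_neq v_sep.
wlog [vF1 vF2] : F1 F2 F1N F2N F1k F2k {v_sep} / v \notin F1 /\ v \in F2.
  move=> W; case: (boolP (v \in F1)) v_sep => vF1; case: (boolP (v \in F2)) => vF2 // _.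
  - by rewrite /distinguishable eq_sym; apply: W.
  - by apply: W.
apply/eqP => eqPF.
have MSC_le := MSC_le_cover (indistinguishable_cover F1N vF1 vF2 eqPF).
have MSC0 : MSC M P v = 0.
  by move: (leq_trans MSC_le F1k); case: (MSC M P v) => // n; rewrite subn1 ltnn.
by move: F2k; rewrite MSC0 leqn0 => /eqP /card0_eq /(_ v); rewrite vF2.
Qed.

Lemma identifiable_le_cover v k V :
  v \in nonmon M -> k_identifiable M P [set v] k -> msc_cover M P v V -> k <= #|V|.
Proof.
move=> vN /forallP /(_ V) /forallP /(_ (V :|: [set v])) /implyP idk.
case/andP => VNv PFv_sub; rewrite leqNgt; apply/negP => V_lt_k.
have vV : v \notin V by apply/negP => /(subsetP VNv); rewrite !inE eqxx.
have VN : V \subset nonmon M by apply: subset_trans VNv (subD1set _ _).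
have same_PF : ~~ distinguishable P V (V :|: [set v]).
  by rewrite /distinguishable PF_setU (setUidPl PFv_sub) eqxx.
apply: (negP same_PF); apply: idk; apply/and5P; split => //.
- by rewrite subUset VN sub1set.
- exact: ltnW.
- by rewrite (leq_trans (leq_card_setU _ _)) // cards1 addn1.
- by apply: contraNneq vV => /setP /(_ v); rewrite !inE eqxx orbT andbT => ->.
Qed.

End Identifiability.

Theorem theorem6 (T : finType) (e : rel T)
    (e_sym : symmetric e) (e_irr : irreflexive e)
    (e_conn : forall x y : T, connect e x y)
    (M : {set T}) (m : nat) (P : 'I_m -> seq T)
    (P_meas : forall i, measurement_path e M (P i)) :
  forall v : T, v \in nonmon M ->
    (MSC M P v - 1 <= Omega M P v) && (Omega M P v <= MSC M P v).
Proof.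
move=> v vN; apply/andP; split.
  apply: leq_Omega; last exact: MSC_pred_identifiable.
  exact: leq_trans (leq_subr _ _) (MSC_le_sigma _ _ _).
apply: Omega_le => k k_le_sigma idk; apply: leq_MSC => // V.
exact: identifiable_le_cover.
Qed.
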